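(* Let $B\ge 1$, let $D$ be any distribution on $\mathscr{X}\times\{\pm1\}$, let $\rho\in[0,1/2)$, and let $s\in\mathscr{F}_B=\{s:\mathscr{X}\to[-B,B]\}$ be any (measurable) scorer. Then, with $\ell=\ell^{\mathrm{unh}}$, $$\mathrm{regret}^{D}_{01}(s)\;\le\;\mathrm{regret}^{D,\mathscr{F}_B}_{\ell}(s)\;=\;\frac{1}{1-2\rho}\cdot\mathrm{regret}^{\mathrm{SLN}(D,\rho),\mathscr{F}_B}_{\ell}(s).$$
   Context: The unhinged loss is $\ell^{\mathrm{unh}}(y,v)=1-yv$ for $y\in\{\pm1\}$, $v\in\mathbb{R}$. For a loss $\ell$, distribution $D$ and function class $\mathscr{F}$, the $\ell$-risk is $\mathbb{L}^D_\ell(s)=\mathbb{E}_{(\mathsf{X},\mathsf{Y})\sim D}[\ell(\mathsf{Y},s(\mathsf{X}))]$ and the restricted regret is $\mathrm{regret}^{D,\mathscr{F}}_\ell(s)=\mathbb{L}^D_\ell(s)-\inf_{t\in\mathscr{F}}\mathbb{L}^D_\ell(t)$. The zero-one loss is $\ell^{01}(y,v)=\mathbb{1}[yv<0]+\tfrac12\mathbb{1}[v=0]$ and $\mathrm{regret}^D_{01}(s)=\mathrm{regret}^{D,\mathbb{R}^{\mathscr{X}}}_{\ell^{01}}(s)$ (infimum over all measurable scorers). For $\rho\in[0,1/2)$, $\mathrm{SLN}(D,\rho)$ is the distribution with the same marginal on $\mathscr{X}$ as $D$ in which each label of $D$ is independently flipped with probability $\rho$; its class-probability function is $\bar\eta(x)=(1-2\rho)\eta(x)+\rho$.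 *)

From Stdlib Require Import Reals Lra ClassicalEpsilon.
Open Scope R_scope.
Set Implicit Arguments.

Definition bounded {X : Type} (f : X -> R) : Prop :=
  exists M, forall x, Rabs (f x) <= M.

(* An expectation operator (integral w.r.t. a probability) on X:
   a normalised, monotone, linear functional on bounded functions. *)
Record Expectation (X : Type) := {
  Ex : (X -> R) -> R;
  Ex_add : forall f g, bounded f -> bounded g ->
      Ex (fun x => f x + g x) = Ex f + Ex g;
  Ex_scal : forall (c : R) f, bounded f -> Ex (fun x => c * f x) = c * Ex f;
  Ex_mono : forall f g, bounded f -> bounded g ->
      (forall x, f x <= g x) -> Ex f <= Ex g;
  Ex_const : forall c : R, Ex (fun _ => c) = c
}.

(* A distribution D on X x {+1,-1}, given by its marginal on X and its
   class-probability function eta(x) = P(Y = 1 | X = x). *)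
Record Dist (X : Type) := mkDist {
  marg : Expectation X;
  eta : X -> R
}.

Definition valid_dist {X : Type} (D : Dist X) : Prop :=
  forall x, 0 <= eta D x <= 1.

Definition SLN {X : Type} (D : Dist X) (rho : R) : Dist X :=
  mkDist (marg D) (fun x => (1 - 2 * rho) * eta D x + rho).

(* losses l(y, v), y in {+1,-1} *)
Definition loss := R -> R -> R.
Definition unhinged : loss := fun y v => 1 - y * v.
Definition zero_one : loss := fun y v =>
  (if Rlt_dec (y * v) 0 then 1 else 0) + / 2 * (if Req_EM_T v 0 then 1 else 0).

(* l-risk E_{(X,Y)~D}[ l(Y, s(X)) ] *)
Definition risk {X : Type} (l : loss) (D : Dist X) (s : X -> R) : R :=
  Ex (marg D) (fun x => eta D x * l 1 (s x) + (1 - eta D x) * l (-1) (s x)).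

Definition is_glb (S : R -> Prop) (m : R) : Prop :=
  (forall r, S r -> m <= r) /\ (forall m', (forall r, S r -> m' <= r) -> m' <= m).
Definition Rinf (S : R -> Prop) : R :=
  epsilon (inhabits 0) (fun m => is_glb S m).

Definition regret {X : Type} (l : loss) (D : Dist X) (F : (X -> R) -> Prop)
    (s : X -> R) : R :=
  risk l D s - Rinf (fun r => exists t, F t /\ r = risk l D t).

Definition all_scorers {X : Type} : (X -> R) -> Prop := fun _ => True.
Definition regret01 {X : Type} (D : Dist X) (s : X -> R) : R :=
  regret zero_one D all_scorers s.

Definition FB {X : Type} (B : R) : (X -> R) -> Prop :=
  fun s => forall x, - B <= s x <= B.

(* Everything reduces to conditional risks at a fixed x with P(Y = 1 | x) = e.
   The unhinged conditional risk is 1 + (1 - 2e) v, minimised over [-B, B] at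
   v = -B sign(1 - 2e), so the unhinged regret is the expectation of
   (1 - 2e) v + B |1 - 2e|.  Symmetric label noise replaces 1 - 2e by
   (1 - 2 rho)(1 - 2e), which scales this pointwise regret by 1 - 2 rho.  The
   zero-one regret is pointwise at most |1 - 2e| when v has the wrong sign
   (and at most |1 - 2e| / 2 when v = 0), while the unhinged one is then at
   least B |1 - 2e| >= |1 - 2e|. *)
From Pilot Require Import Defs.
From Stdlib Require Import Reals.
From Stdlib Require Import Lra ClassicalEpsilon FunctionalExtensionality.
Open Scope R_scope.

(* [Reals] also exports a [bounded] (on sets of reals); restore the one of [Defs]. *)
Import Pilot.Defs.

Lemma bounded_between {X : Type} (f : X -> R) (M : R) :
  (forall x, - M <= f x <= M) -> bounded f.
Proof. intros H; exists M; intros x; apply Rabs_le, H. Qed.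

Section Expectation.
Context {X : Type} (E : Expectation X).

Lemma Ex_ext (f g : X -> R) : (forall x, f x = g x) -> Ex E f = Ex E g.
Proof. intros H; f_equal; apply functional_extensionality, H. Qed.

Lemma Ex_sub (f g : X -> R) : bounded f -> bounded g ->
  Ex E (fun x => f x - g x) = Ex E f - Ex E g.
Proof.
  intros hf hg.
  assert (hg' : bounded (fun x => -1 * g x)).
  { destruct hg as [M hM]; exists M; intros x.
    rewrite Rabs_mult, (Rabs_left (-1)) by lra; specialize (hM x); lra. }
  rewrite (Ex_ext _ (fun x => f x + -1 * g x)) by (intros; ring).
  rewrite Ex_add, Ex_scal by assumption; ring.
Qed.

End Expectation.

Lemma Rinf_min (S : R -> Prop) (m : R) : (forall r, S r -> m <= r) -> S m -> Rinf S = m.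
Proof.
  intros hlow hm.
  assert (hglb : is_glb S m) by (split; [exact hlow | intros m' h; exact (h m hm)]).
  destruct (epsilon_spec (inhabits 0) (is_glb S) (ex_intro _ m hglb)) as [hlow' hmax'].
  unfold Rinf; apply Rle_antisym; [apply (proj2 hglb); exact hlow' | apply hmax'; exact hlow].
Qed.

Definition cond_risk (l : loss) (e v : R) : R := e * l 1 v + (1 - e) * l (-1) v.

Section PointwiseRegret.
Context {X : Type} (l : loss) (D : Dist X) (F : (X -> R) -> Prop).

Lemma regret_pointwise_min (s tmin : X -> R) :
  (forall t, F t -> bounded (fun x => cond_risk l (eta D x) (t x))) ->
  (forall t, F t -> forall x, cond_risk l (eta D x) (tmin x) <= cond_risk l (eta D x) (t x)) ->
  F tmin -> F s ->
  regret l D F s =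
  Ex (marg D) (fun x => cond_risk l (eta D x) (s x) - cond_risk l (eta D x) (tmin x)).
Proof.
  intros hbnd hmin htmin hs.
  assert (hinf : Rinf (fun r => exists t, F t /\ r = risk l D t) = risk l D tmin).
  { apply Rinf_min.
    - intros r [t [ht ->]]; apply Ex_mono; [apply hbnd.. | apply hmin]; assumption.
    - exists tmin; auto. }
  unfold regret; rewrite hinf, Ex_sub; auto.
Qed.

End PointwiseRegret.

Definition bayes01 (e : R) : R := if Rle_dec e (/ 2) then -1 else 1.

Definition unhinged_minimizer (B e : R) : R := if Rle_dec 0 (1 - 2 * e) then - B else B.

Definition unhinged_cond_regret (B e v : R) : R := (1 - 2 * e) * v + B * Rabs (1 - 2 * e).

Lemma cond_risk_unhinged (e v : R) : cond_risk unhinged e v = 1 + (1 - 2 * e) * v.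
Proof. unfold cond_risk, unhinged; ring. Qed.

Lemma cond_risk_zero_one_bounds (e v : R) :
  0 <= e <= 1 -> 0 <= cond_risk zero_one e v <= 1.
Proof.
  intros he; unfold cond_risk, zero_one.
  repeat destruct Rlt_dec; repeat destruct Req_EM_T; nra.
Qed.

Lemma cond_risk_zero_one_bayes (e v : R) :
  0 <= e <= 1 -> cond_risk zero_one e (bayes01 e) <= cond_risk zero_one e v.
Proof.
  intros he; unfold cond_risk, zero_one, bayes01.
  destruct Rle_dec; repeat destruct Rlt_dec; repeat destruct Req_EM_T; lra.
Qed.

Lemma cond_risk_unhinged_min (B e v : R) :
  - B <= v <= B -> cond_risk unhinged e (unhinged_minimizer B e) <= cond_risk unhinged e v.
Proof.
  intros hv; rewrite !cond_risk_unhinged; unfold unhinged_minimizer.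
  destruct Rle_dec; nra.
Qed.

Lemma cond_regret_unhinged (B e v : R) :
  cond_risk unhinged e v - cond_risk unhinged e (unhinged_minimizer B e)
  = unhinged_cond_regret B e v.
Proof.
  rewrite !cond_risk_unhinged; unfold unhinged_minimizer, unhinged_cond_regret.
  destruct Rle_dec; [rewrite Rabs_right | rewrite Rabs_left]; lra.
Qed.

Lemma cond_regret_zero_one_le_unhinged (B e v : R) :
  0 <= e <= 1 -> 1 <= B -> - B <= v <= B ->
  cond_risk zero_one e v - cond_risk zero_one e (bayes01 e) <= unhinged_cond_regret B e v.
Proof.
  intros he hB hv; unfold cond_risk, zero_one, bayes01, unhinged_cond_regret.
  unfold Rabs; destruct Rcase_abs, Rle_dec;
    repeat destruct Rlt_dec; repeat destruct Req_EM_T; subst; nra.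
Qed.

Lemma unhinged_cond_regret_SLN (B e v rho : R) : 0 <= rho < / 2 ->
  unhinged_cond_regret B ((1 - 2 * rho) * e + rho) v
  = (1 - 2 * rho) * unhinged_cond_regret B e v.
Proof.
  intros hrho; unfold unhinged_cond_regret.
  replace (1 - 2 * ((1 - 2 * rho) * e + rho)) with ((1 - 2 * rho) * (1 - 2 * e)) by ring.
  rewrite Rabs_mult, (Rabs_right (1 - 2 * rho)) by lra; ring.
Qed.

Section Regrets.
Context {X : Type} (D : Dist X) (hD : valid_dist D).

Lemma valid_dist_SLN (rho : R) : 0 <= rho < / 2 -> valid_dist (SLN D rho).
Proof. intros hrho x; simpl; specialize (hD x); nra. Qed.

Lemma regret01_pointwise (s : X -> R) :
  regret01 D s =
  Ex (marg D) (fun x => cond_risk zero_one (eta D x) (s x)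
                        - cond_risk zero_one (eta D x) (bayes01 (eta D x))).
Proof.
  apply regret_pointwise_min; try easy.
  - intros t _; apply (bounded_between _ 1); intros x.
    pose proof (cond_risk_zero_one_bounds (eta D x) (t x) (hD x)); lra.
  - intros t _ x; apply cond_risk_zero_one_bayes, hD.
Qed.

Lemma regret_unhinged_FB (B : R) (s : X -> R) : 0 <= B -> FB B s ->
  regret unhinged D (FB B) s =
  Ex (marg D) (fun x => unhinged_cond_regret B (eta D x) (s x)).
Proof.
  intros hB hs.
  rewrite (regret_pointwise_min _ _ _ _ (fun x => unhinged_minimizer B (eta D x))).
  - apply Ex_ext; intros x; apply cond_regret_unhinged.
  - intros t ht; apply (bounded_between _ (1 + B)); intros x.
    rewrite cond_risk_unhinged; specialize (hD x); specialize (ht x); nra.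
  - intros t ht x; apply cond_risk_unhinged_min, ht.
  - intros x; unfold unhinged_minimizer; destruct Rle_dec; lra.
  - exact hs.
Qed.

Lemma bounded_unhinged_cond_regret (B : R) (s : X -> R) : FB B s ->
  bounded (fun x => unhinged_cond_regret B (eta D x) (s x)).
Proof.
  intros hs; apply (bounded_between _ (2 * B)); intros x; specialize (hD x); specialize (hs x).
  unfold unhinged_cond_regret, Rabs; destruct Rcase_abs; nra.
Qed.

End Regrets.

Theorem mainTheorem4 (X : Type) (D : Dist X) (B rho : R) (s : X -> R)
  (hD : valid_dist D) (hB : 1 <= B) (hrho : 0 <= rho < / 2)
  (hs : FB B s) :
  regret01 D s <= regret unhinged D (FB B) s /\
  regret unhinged D (FB B) s
    = / (1 - 2 * rho) * regret unhinged (SLN D rho) (FB B) s.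
Proof.
  pose proof (bounded_unhinged_cond_regret _ hD _ _ hs) as hbnd.
  assert (hB0 : 0 <= B) by lra.
  rewrite (regret_unhinged_FB _ hD _ _ hB0 hs),
    (regret_unhinged_FB _ (valid_dist_SLN _ hD _ hrho) _ _ hB0 hs).
  split.
  - rewrite (regret01_pointwise _ hD).
    apply Ex_mono; [| exact hbnd |].
    + apply (bounded_between _ 1); intros x.
      pose proof (cond_risk_zero_one_bounds (eta D x) (s x) (hD x)).
      pose proof (cond_risk_zero_one_bounds (eta D x) (bayes01 (eta D x)) (hD x)); lra.
    + intros x; apply cond_regret_zero_one_le_unhinged; auto.
  - simpl; rewrite (Ex_ext _ (fun x => unhinged_cond_regret B ((1 - 2 * rho) * eta D x + rho) (s x))
                             (fun x => (1 - 2 * rho) * unhinged_cond_regret B (eta D x) (s x)))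
      by (intros x; apply unhinged_cond_regret_SLN, hrho).
    rewrite Ex_scal by exact hbnd; field; lra.
Qed.
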